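(* For every graph $G$ and integer $m\ge1$, the lexicographic product $G\circ mK_1$ is well-bicovered if and only if $G$ is well-bicovered.
   Context: All graphs are finite and simple; ''subgraph'' means induced subgraph. $mK_1$ is the edgeless graph on $m$ vertices. A graph is well-bicovered if every vertex-inclusion-maximal induced bipartite subgraph has the same order. The lexicographic product $G\circ H$ has vertex set $V(G)\times V(H)$, with $(u,v)$ adjacent to $(x,y)$ iff $ux\in E(G)$, or $u=x$ and $vy\in E(H)$. *)

From mathcomp Require Import all_boot.
Set Implicit Arguments. Unset Strict Implicit. Unset Printing Implicit Defensive.

(* A finite simple graph: vertex type T : finType with an adjacency relation
   e : rel T that is symmetric and irreflexive (assumed in the theorem). *)

Section Graphs.
Variable T : finType.

Definition independent (e : rel T) (A : {set T}) : bool :=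
  [forall x in A, forall y in A, ~~ e x y].

Definition bipartite_set (e : rel T) (S : {set T}) : bool :=
  [exists A : {set T}, [&& A \subset S, independent e A & independent e (S :\: A)]].

Definition well_bicovered (e : rel T) : Prop :=
  forall S1 S2 : {set T},
    maxset (bipartite_set e) S1 -> maxset (bipartite_set e) S2 -> #|S1| = #|S2|.
End Graphs.

Definition lexprod (T U : finType) (e : rel T) (f : rel U) : rel (T * U) :=
  fun x y => e x.1 y.1 || ((x.1 == y.1) && f x.2 y.2).

Definition edgeless (m : nat) : rel 'I_m := fun _ _ => false.
Arguments edgeless m : clear implicits.

From mathcomp Require Import all_boot.
Set Implicit Arguments. Unset Strict Implicit. Unset Printing Implicit Defensive.

(* In G o mK_1 the m copies of a vertex are pairwise non-adjacent twins, so
   for a bipartite S of G o mK_1 the blow-up of its shadow fst @: S is still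
   bipartite (colour each copy like the shadow).  Hence every maximal
   bipartite set is a full blow-up fst @^-1: P, and P |-> fst @^-1: P is a
   bijection between the maximal bipartite sets of G and of G o mK_1 that
   multiplies orders by m. *)

Lemma independentP (T : finType) (e : rel T) (A : {set T}) :
  reflect (forall x y, x \in A -> y \in A -> ~~ e x y) (independent e A).
Proof.
apply: (iffP forall_inP) => [eA x y xA yA | eA x xA].
  by move/forall_inP: (eA x xA); apply.
by apply/forall_inP => y yA; apply: eA.
Qed.

Lemma bipartite_setP (T : finType) (e : rel T) (S : {set T}) :
  reflect (exists A : {set T},
             [/\ A \subset S, independent e A & independent e (S :\: A)])
          (bipartite_set e S).
Proof.
apply: (iffP existsP) => [[A /and3P[]] | [A []]] AS iA iSA; exists A => //.
exact/and3P.
Qed.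

Lemma independentS (T : finType) (e : rel T) (A B : {set T}) :
  B \subset A -> independent e A -> independent e B.
Proof.
move=> /subsetP sBA /independentP eA; apply/independentP => x y xB yB.
exact: eA (sBA x xB) (sBA y yB).
Qed.

Section LexprodEdgeless.
Variables (T U : finType) (e : rel T) (u0 : U).

Local Notation h := (lexprod e (fun _ _ : U => false)).

Lemma lexprod_edgelessE x y : h x y = e x.1 y.1.
Proof. by rewrite /lexprod andbF orbF. Qed.

Lemma imset_fst_preimset (P : {set T}) : fst @: (fst @^-1: P : {set T * U}) = P.
Proof.
apply/setP => v; apply/imsetP/idP => [[x + ->] | vP]; first by rewrite inE.
by exists (v, u0); rewrite ?inE.
Qed.

Lemma subset_preimset_imset_fst (S : {set T * U}) : S \subset fst @^-1: (fst @: S).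
Proof. by apply/subsetP => x xS; rewrite inE imset_f. Qed.

Lemma card_preimset_fst (P : {set T}) : #|fst @^-1: P : {set T * U}| = #|P| * #|U|.
Proof.
have -> : fst @^-1: P = setX P [set: U] by apply/setP => -[v u]; rewrite !inE andbT.
by rewrite cardsX cardsT.
Qed.

Lemma independent_imset_fst (A : {set T * U}) :
  independent h A -> independent e (fst @: A).
Proof.
move/independentP => hA; apply/independentP => _ _ /imsetP[x xA ->] /imsetP[y yA ->].
by rewrite -lexprod_edgelessE hA.
Qed.

Lemma independent_preimset_fst (P : {set T}) :
  independent e P -> independent h (fst @^-1: P).
Proof.
move/independentP => eP; apply/independentP => x y.
by rewrite !inE lexprod_edgelessE; apply: eP.
Qed.

Lemma bipartite_imset_fst (S : {set T * U}) :
  bipartite_set h S -> bipartite_set e (fst @: S).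
Proof.
case/bipartite_setP => A [AS iA iSA]; apply/bipartite_setP.
exists (fst @: A); split; [exact: imsetS | exact: independent_imset_fst |].
apply: (independentS _ (independent_imset_fst iSA)).
apply/subsetP => _ /setDP[/imsetP[s sS ->] sA].
by rewrite imset_f // inE sS andbT; apply: contra sA; apply: imset_f.
Qed.

Lemma bipartite_preimset_fst (P : {set T}) :
  bipartite_set e P -> bipartite_set h (fst @^-1: P).
Proof.
case/bipartite_setP => A [AP iA iPA]; apply/bipartite_setP.
exists (fst @^-1: A); split; [exact: preimsetS | exact: independent_preimset_fst |].
by rewrite -preimsetD; apply: independent_preimset_fst.
Qed.

Lemma maxset_bipartite_preimset_fst (S : {set T * U}) :
  maxset (bipartite_set h) S -> S = fst @^-1: (fst @: S).
Proof.
case/maxsetP => bS maxS; apply/esym/maxS; last exact: subset_preimset_imset_fst.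
exact/bipartite_preimset_fst/bipartite_imset_fst.
Qed.

Lemma maxset_bipartite_imset_fst (S : {set T * U}) :
  maxset (bipartite_set h) S -> maxset (bipartite_set e) (fst @: S).
Proof.
move=> mS; have SE := maxset_bipartite_preimset_fst mS.
case/maxsetP: mS => bS maxS; apply/maxsetP; split => [|Q bQ sQ].
  exact: bipartite_imset_fst.
have := maxS _ (bipartite_preimset_fst bQ); rewrite {1}SE => /(_ (preimsetS _ sQ)).
by move <-; rewrite imset_fst_preimset.
Qed.

Lemma maxset_bipartite_preimset (P : {set T}) :
  maxset (bipartite_set e) P -> maxset (bipartite_set h) (fst @^-1: P).
Proof.
case/maxsetP => bP maxP; apply/maxsetP; split; first exact: bipartite_preimset_fst.
move=> S bS sS; have eP : fst @: S = P.
  apply: maxP; first exact: bipartite_imset_fst.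
  by rewrite -{1}(imset_fst_preimset P) imsetS.
by apply/eqP; rewrite eqEsubset sS -eP subset_preimset_imset_fst.
Qed.

End LexprodEdgeless.

Theorem mainTheorem5 (T : finType) (e : rel T) (m : nat) :
  symmetric e -> irreflexive e -> 0 < m ->
  (well_bicovered (lexprod e (edgeless m)) <-> well_bicovered e).
Proof.
move=> _ _ m_gt0; have u0 : 'I_m := Ordinal m_gt0.
split=> [wbh P1 P2 mP1 mP2 | wbe S1 S2 mS1 mS2].
- have := wbh _ _ (maxset_bipartite_preimset u0 mP1) (maxset_bipartite_preimset u0 mP2).
  by rewrite !card_preimset_fst card_ord => /eqP; rewrite eqn_pmul2r // => /eqP.
- rewrite (maxset_bipartite_preimset_fst mS1) (maxset_bipartite_preimset_fst mS2).
  by rewrite !card_preimset_fst (wbe _ _ (maxset_bipartite_imset_fst u0 mS1)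
                                       (maxset_bipartite_imset_fst u0 mS2)).
Qed.
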